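(* Let $(X,\|\cdot\|_X)$ be a Banach space and $\mathcal{K}\subset X$ a bounded set. For every $n\ge1$, every $\gamma>0$ and every norm $\|\cdot\|_{Y_n}$ on $\mathbb{R}^n$, $$\mathrm{rad}(\mathcal{K})-\gamma\le d^\gamma(\mathcal{K},Y_n)_X\le\mathrm{rad}(\mathcal{K}).$$
   Context: $\mathrm{rad}(\mathcal{K})=\inf_{g\in X}\sup_{f\in\mathcal{K}}\|f-g\|_X$. For a norm $\|\cdot\|_{Y_n}$ on $\mathbb{R}^n$ let $B_{Y_n}=\{y\in\mathbb{R}^n:\|y\|_{Y_n}\le1\}$. The fixed Lipschitz width is $d^\gamma(\mathcal{K},Y_n)_X=\inf_{\Phi}\sup_{f\in\mathcal{K}}\inf_{y\in B_{Y_n}}\|f-\Phi(y)\|_X$, the infimum being over all maps $\Phi:B_{Y_n}\to X$ with $\|\Phi(y)-\Phi(y')\|_X\le\gamma\|y-y'\|_{Y_n}$ for all $y,y'\in B_{Y_n}$. *)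

From HB Require Import structures.
From mathcomp Require Import all_boot all_order all_algebra.
From mathcomp Require Import all_classical all_reals all_analysis.
Set Implicit Arguments. Unset Strict Implicit. Unset Printing Implicit Defensive.
Import Order.TTheory GRing.Theory Num.Theory.
Import numFieldNormedType.Exports.
Local Open Scope classical_set_scope.
Local Open Scope ring_scope.

Definition is_norm (R : realType) (n : nat) (N : 'rV[R]_n -> R) : Prop :=
  [/\ forall y, 0 <= N y,
      forall y, N y = 0 -> y = 0,
      forall (a : R) y, N (a *: y) = `|a| * N y
    & forall y y', N (y + y') <= N y + N y'].

Definition unit_ball (R : realType) (n : nat) (N : 'rV[R]_n -> R) : set 'rV[R]_n :=
  [set y | N y <= 1].

Local Open Scope ereal_scope.

Definition cheb_rad (R : realType) (X : normedModType R) (K : set X) : \bar R :=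
  ereal_inf [set ereal_sup [set (`|f - g|)%:E | f in K] | g in [set: X]].

(* gamma-Lipschitz maps from the unit ball of N into X (values outside the
   ball are irrelevant). *)
Definition lip_on_ball (R : realType) (X : normedModType R) (n : nat)
    (N : 'rV[R]_n -> R) (gamma : R) (Phi : 'rV[R]_n -> X) : Prop :=
  forall y y', unit_ball N y -> unit_ball N y' ->
    (`|Phi y - Phi y'| <= gamma * N (y - y'))%R.

Definition fixed_lip_width (R : realType) (X : normedModType R) (K : set X)
    (n : nat) (N : 'rV[R]_n -> R) (gamma : R) : \bar R :=
  ereal_inf [set ereal_sup [set ereal_inf [set (`|f - Phi y|)%:E | y in unit_ball N]
                             | f in K]
            | Phi in lip_on_ball N gamma].

From HB Require Import structures.
From mathcomp Require Import all_boot all_order all_algebra.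
From mathcomp Require Import all_classical all_reals all_analysis.
Set Implicit Arguments. Unset Strict Implicit. Unset Printing Implicit Defensive.
Import Order.TTheory GRing.Theory Num.Theory.
Import numFieldNormedType.Exports.
Local Open Scope classical_set_scope.
Local Open Scope ring_scope.

(* A constant map is gamma-Lipschitz for every gamma >= 0, and its image is a
   single point g, so the width is at most sup_{f in K} ||f - g|| for every g.
   Conversely, if Phi is gamma-Lipschitz then Phi(B) lies within gamma of
   Phi(0), hence dist(f, Phi(B)) >= ||f - Phi(0)|| - gamma, and taking the
   supremum over K gives at least rad(K) - gamma. *)

Section LipschitzOnBall.
Variables (R : realType) (X : normedModType R) (n : nat) (N : 'rV[R]_n -> R).
Hypothesis normN : is_norm N.

Lemma is_norm0 : N 0 = 0.
Proof.
by case: normN => _ _ NZ _; rewrite -(scale0r (0 : 'rV[R]_n)) NZ normr0 mul0r.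
Qed.

Lemma unit_ball0 : unit_ball N 0.
Proof. by rewrite /unit_ball /= is_norm0 ler01. Qed.

Lemma lip_on_ball_cst (gamma : R) (g : X) :
  0 <= gamma -> lip_on_ball N gamma (fun=> g).
Proof.
by case: normN => N_ge0 _ _ _ gamma_ge0 y y' _ _; rewrite subrr normr0 mulr_ge0.
Qed.

Lemma lip_on_ball_dist0 (gamma : R) (Phi : 'rV[R]_n -> X) (y : 'rV[R]_n) :
  0 <= gamma -> lip_on_ball N gamma Phi -> unit_ball N y ->
  `|Phi y - Phi 0| <= gamma.
Proof.
move=> gamma_ge0 lipPhi By.
have := lipPhi y 0 By unit_ball0; rewrite subr0 => /le_trans; apply.
by rewrite -[leRHS]mulr1 ler_wpM2l.
Qed.

Local Open Scope ereal_scope.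

Lemma dist_image_lip_ge (gamma : R) (Phi : 'rV[R]_n -> X) (f : X) :
  (0 <= gamma)%R -> lip_on_ball N gamma Phi ->
  `|f - Phi 0|%:E - gamma%:E <= ereal_inf [set `|f - Phi y|%:E | y in unit_ball N].
Proof.
move=> gamma_ge0 lipPhi; apply: le_ereal_inf_tmp => _ [y By <-].
rewrite lee_fin lerBlDr.
have -> : (f - Phi 0 = (f - Phi y) + (Phi y - Phi 0))%R by rewrite addrA subrK.
by apply: (le_trans (ler_normD _ _)); rewrite lerD2l lip_on_ball_dist0.
Qed.

Lemma dist_image_cst (f g : X) :
  ereal_inf [set `|f - g|%:E | _ in unit_ball N] = `|f - g|%:E.
Proof.
by apply: ereal_inf_cst; apply/set0P; exists 0%R; exact: unit_ball0.
Qed.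

Lemma cheb_rad_le_sup_dist (K : set X) (g : X) :
  cheb_rad K <= ereal_sup [set `|f - g|%:E | f in K].
Proof. by apply: ereal_inf_lbound; exists g. Qed.

Lemma fixed_lip_width_le_cheb_rad (K : set X) (gamma : R) :
  (0 <= gamma)%R -> fixed_lip_width K N gamma <= cheb_rad K.
Proof.
move=> gamma_ge0; apply: le_ereal_inf_tmp => _ [g _ <-].
apply: ereal_inf_lbound; exists (fun=> g); first exact: lip_on_ball_cst.
congr ereal_sup; apply: eq_set => z; apply: propext.
by split=> -[f Kf <-]; exists f; rewrite // dist_image_cst.
Qed.

Lemma cheb_rad_sub_le_fixed_lip_width (K : set X) (gamma : R) :
  (0 <= gamma)%R -> cheb_rad K - gamma%:E <= fixed_lip_width K N gamma.
Proof.
move=> gamma_ge0; apply: le_ereal_inf_tmp => _ [Phi lipPhi <-].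
rewrite leeBlDr //; apply: le_trans (cheb_rad_le_sup_dist K (Phi 0%R)) _.
apply: ge_ereal_sup => _ [f Kf <-]; rewrite -leeBlDr //.
apply: le_trans (dist_image_lip_ge f gamma_ge0 lipPhi) _.
by apply: ereal_sup_ubound; exists f.
Qed.

End LipschitzOnBall.

Theorem lemma2p4 (R : realType) (X : completeNormedModType R) (K : set X)
  (hK : [bounded x | x in K]) (n : nat) (hn : (1 <= n)%N) (gamma : R)
  (hgamma : 0 < gamma) (N : 'rV[R]_n -> R) (hN : is_norm N) :
  (cheb_rad K - gamma%:E <= fixed_lip_width K N gamma)%E /\
  (fixed_lip_width K N gamma <= cheb_rad K)%E.
Proof.
have gamma_ge0 := ltW hgamma.
split; first exact: cheb_rad_sub_le_fixed_lip_width.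
exact: fixed_lip_width_le_cheb_rad.
Qed.
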